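(* Let $n\ge 2$ and let $\alpha\in B_n\subset \mathrm{Aut}(F_n)$. Let $B_\alpha\in GL(n,\mathbb{Z}[t,t^{-1}])$ be the Burau matrix of $\alpha$, and for $t_0\in\mathbb{C}\setminus\{0\}$ let $B_\alpha(t_0)\in GL(n,\mathbb{C})$ be the matrix obtained by evaluating every entry at $t=t_0$. Then $$\mathrm{GR}(\alpha)\;\ge\;\sup\{R(B_\alpha(t_0)) : t_0\in\mathbb{C},\ |t_0|=1\},$$ where $R(M)$ denotes the spectral radius of a complex matrix $M$.
   Context: $F_n=\langle x_1,\dots,x_n\rangle$ is the free group on $x_1,\dots,x_n$. Automorphisms act on the right: $(g)\alpha$ denotes the image of $g$, and $(g)(\alpha\beta)=((g)\alpha)\beta$. The braid group $B_n$ is the subgroup of $\mathrm{Aut}(F_n)$ of automorphisms $\alpha$ such that there is a permutation $\mu$ of $\{1,\dots,n\}$ and elements $A_i\in F_n$ with $(x_i)\alpha=A_ix_{\mu(i)}A_i^{-1}$ for all $i$, and $(x_1x_2\cdots x_n)\alpha=x_1x_2\cdots x_n$. It is generated by $\sigma_1,\dots,\sigma_{n-1}$, where $(x_i)\sigma_i=x_ix_{i+1}x_i^{-1}$, $(x_{i+1})\sigma_i=x_i$, $(x_j)\sigma_i=x_j$ for $j\ne i,i+1$. Fox free derivatives: for $j=1,\dots,n$, $\partial/\partial x_j:\mathbb{Z}F_n\to\mathbb{Z}F_n$ is the unique additive map with $\partial(g_1g_2)/\partial x_j=\partial g_1/\partial x_j+g_1\,\partial g_2/\partial x_j$ for $g_1,g_2\in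 F_n$ and $\partial x_i/\partial x_j=\delta_{ij}$. Let $\varphi:\mathbb{Z}F_n\to\mathbb{Z}[t,t^{-1}]$ be the ring homomorphism induced by $x_i\mapsto t$ for all $i$. The Burau matrix of $\alpha\in B_n$ is $B_\alpha=(b_{ij})_{1\le i,j\le n}$ with $b_{ij}=\varphi\big(\partial((x_i)\alpha)/\partial x_j\big)$; one has $B_{\alpha\beta}=B_\alpha B_\beta$. Growth rate: for $g\in F_n$ let $L(g)$ be the length of the reduced word representing $g$ in the letters $x_i^{\pm1}$. For an automorphism $\alpha$ of $F_n$, $\mathrm{GR}(\alpha)=\sup_{g\in F_n}\limsup_{p\to\infty}L((g)\alpha^p)^{1/p}$. *)

From HB Require Import structures.
From mathcomp Require Import all_boot all_order all_algebra all_fingroup.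
From mathcomp Require Import all_classical all_reals all_analysis.
From mathcomp Require Import complex.
Set Implicit Arguments. Unset Strict Implicit. Unset Printing Implicit Defensive.
Import Order.TTheory GRing.Theory Num.Theory.
Local Open Scope ring_scope.

(* a letter (i, true) is x_i, (i, false) is x_i^{-1}; a word is a seq of letters *)
Definition letter (n : nat) := ('I_n * bool)%type.
Definition word (n : nat) := seq (letter n).

Definition linv {n} (a : letter n) : letter n := (a.1, ~~ a.2).
Definition winv {n} (w : word n) : word n := rev (map linv w).

Definition push {n} (a : letter n) (s : word n) : word n :=
  if s is b :: s' then (if b == linv a then s' else a :: s) else [:: a].
Definition reduce {n} (w : word n) : word n := foldr push [::] w.

Definition wlen {n} (w : word n) : nat := size (reduce w).

(* An endomorphism of F_n is given by the images f i of the generators x_i;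
   [apply f g] is (g)f, computed as a reduced word. *)
Definition apply {n} (f : 'I_n -> word n) (w : word n) : word n :=
  reduce (flatten (map (fun a : letter n => if a.2 then f a.1 else winv (f a.1)) w)).

Definition gen {n} (i : 'I_n) : word n := [:: (i, true)].

Definition is_aut {n} (f : 'I_n -> word n) : Prop :=
  exists h : 'I_n -> word n,
    forall i, apply h (f i) = gen i /\ apply f (h i) = gen i.

Definition apply_pow {n} (f : 'I_n -> word n) (p : nat) (w : word n) : word n :=
  iter p (apply f) (reduce w).

Definition prod_gens (n : nat) : word n := [seq (i, true) | i <- enum 'I_n].

Definition is_braid {n} (f : 'I_n -> word n) : Prop :=
  is_aut f /\
  (exists (mu : 'S_n) (A : 'I_n -> word n),
     forall i, reduce (f i) = reduce (A i ++ gen (mu i) ++ winv (A i))) /\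
  apply f (prod_gens n) = reduce (prod_gens n).

(* an element of Z F_n as a formal Z-linear combination of words *)
Definition zfn (n : nat) := seq (int * word n).

Definition lmul {n} (g : word n) (s : zfn n) : zfn n :=
  [seq (c.1, g ++ c.2) | c <- s].

(* d w / d x_j, via the product rule d(a w) = d a + a (d w),
   with d x_i/d x_j = delta_ij, d x_i^{-1}/d x_j = - delta_ij x_i^{-1} *)
Fixpoint fox {n} (j : 'I_n) (w : word n) : zfn n :=
  match w with
  | [::] => [::]
  | a :: w' =>
      (if a.1 == j then (if a.2 then [:: (1%Z, [::])] else [:: ((-1)%Z, [:: a])])
       else [::]) ++ lmul [:: a] (fox j w')
  end.

(* exponent sum: phi(g) = t^(expsum g) *)
Definition expsum {n} (w : word n) : int :=
  \sum_(a <- w) (if a.2 then 1%Z else (-1)%Z).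

(* phi : Z F_n -> Z[t,t^-1] followed by evaluation at t = t0 *)
Definition phi_eval {n} {F : unitRingType} (t0 : F) (s : zfn n) : F :=
  \sum_(c <- s) (c.1)%:~R * t0 ^ (expsum c.2).

Definition burau_eval {n} {F : unitRingType} (f : 'I_n -> word n) (t0 : F) : 'M[F]_n :=
  \matrix_(i < n, j < n) phi_eval t0 (fox j (reduce (f i))).

Definition growth_rate {R : realType} {n} (f : 'I_n -> word n) : \bar R :=
  ereal_sup [set limn_esup (fun p : nat =>
                 (((wlen (apply_pow f p g))%:R : R) `^ (p%:R^-1))%:E)
            | g in [set: word n]].

Definition spectral_radius {R : realType} {n} (M : 'M[R[i]]_n) : \bar R :=
  ereal_sup [set (Normc.normc lam)%:E | lam in [set lam | eigenvalue M lam]].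

From HB Require Import structures.
From mathcomp Require Import all_boot all_order all_algebra all_fingroup.
From mathcomp Require Import all_classical all_reals all_analysis.
From mathcomp Require Import complex.
From mathcomp Require Import ring.
Set Implicit Arguments. Unset Strict Implicit. Unset Printing Implicit Defensive.
Import Order.TTheory GRing.Theory Num.Theory.
Local Open Scope ring_scope.

(* Every generator is sent to a conjugate of a generator, so alpha preserves
   exponent sums; hence phi o alpha = phi and the Fox chain rule becomes the
   matrix identity row(w alpha) = row(w) B_alpha(t), where row(w) is the vector
   of evaluated Fox derivatives of w.  At |t| = 1 each letter of w contributes a
   term of modulus at most 1, so every entry of row(w) is bounded by L(w).  For
   a left eigenvector v of B_alpha(t) with eigenvalue lam this gives
   |lam|^p |v_j| <= sum_i |v_i| L((x_i) alpha^p), so for every r < |lam| some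
   generator satisfies L((x_i) alpha^p) >= r^p for infinitely many p. *)

Section ExponentSum.
Variable n : nat.
Implicit Types (a : letter n) (u w : word n).

Definition lexp a : int := if a.2 then 1 else -1.

Lemma expsum_nil : expsum ([::] : word n) = 0.
Proof. by rewrite /expsum big_nil. Qed.

Lemma expsum_cons a w : expsum (a :: w) = lexp a + expsum w.
Proof. by rewrite /expsum big_cons. Qed.

Lemma expsum_letter a : expsum [:: a] = lexp a.
Proof. by rewrite expsum_cons expsum_nil addr0. Qed.

Lemma expsum_cat u w : expsum (u ++ w) = expsum u + expsum w.
Proof. by rewrite /expsum big_cat. Qed.

Lemma lexp_linv a : lexp (linv a) = - lexp a.
Proof. by case: a => k []. Qed.

Lemma expsum_push a w : expsum (push a w) = expsum (a :: w).
Proof.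
case: w => [|b w] //=; case: eqP => [->|_] //.
by rewrite !expsum_cons lexp_linv addrA subrr add0r.
Qed.

Lemma expsum_reduce w : expsum (reduce w) = expsum w.
Proof. by elim: w => //= a w IH; rewrite expsum_push !expsum_cons IH. Qed.

Lemma winv_cons a w : winv (a :: w) = winv w ++ [:: linv a].
Proof. by rewrite /winv /= rev_cons cats1. Qed.

Lemma expsum_winv w : expsum (winv w) = - expsum w.
Proof.
elim: w => [|a w IH]; first by rewrite expsum_nil oppr0.
by rewrite winv_cons expsum_cat IH expsum_letter lexp_linv expsum_cons opprD addrC.
Qed.

Lemma expsum_conj u i : expsum (u ++ gen i ++ winv u) = 1.
Proof. by rewrite !expsum_cat expsum_winv expsum_letter addrCA subrr addr0. Qed.

Lemma braid_expsum_gen (f : 'I_n -> word n) : is_braid f -> forall i, expsum (f i) = 1.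
Proof.
by move=> [_ [[mu [A hA]] _]] i; rewrite -expsum_reduce hA expsum_reduce expsum_conj.
Qed.

Definition limg (f : 'I_n -> word n) a : word n := if a.2 then f a.1 else winv (f a.1).

Lemma applyE (f : 'I_n -> word n) w : apply f w = reduce (flatten (map (limg f) w)).
Proof. by []. Qed.

Lemma expsum_limg (f : 'I_n -> word n) a :
  (forall i, expsum (f i) = 1) -> expsum (limg f a) = lexp a.
Proof. by move=> expsum_f; case: a => k [] /=; rewrite ?expsum_winv expsum_f. Qed.

Lemma expsum_flatten_limg (f : 'I_n -> word n) w :
  (forall i, expsum (f i) = 1) -> expsum (flatten (map (limg f) w)) = expsum w.
Proof.
move=> expsum_f; elim: w => [|a w IH] //=.
by rewrite expsum_cat IH expsum_cons expsum_limg.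
Qed.

End ExponentSum.

Section FoxDerivative.
Variables (F : fieldType) (n : nat) (t : F).
Hypothesis t_neq0 : t != 0.
Implicit Types (a : letter n) (u w : word n) (s : zfn n).

Definition foxd (j : 'I_n) w : F := phi_eval t (fox j w).

Definition lcoef a : F := if a.2 then 1 else - t ^ (-1).

Lemma phi_eval_nil : phi_eval t ([::] : zfn n) = 0.
Proof. by rewrite /phi_eval big_nil. Qed.

Lemma phi_eval_cat s1 s2 : phi_eval t (s1 ++ s2) = phi_eval t s1 + phi_eval t s2.
Proof. by rewrite /phi_eval big_cat. Qed.

Lemma phi_eval_lmul u s : phi_eval t (lmul u s) = t ^ expsum u * phi_eval t s.
Proof.
rewrite /phi_eval /lmul big_map mulr_sumr; apply: eq_bigr => c _ /=.
by rewrite expsum_cat expfzDr // mulrCA.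
Qed.

Lemma foxd_nil j : foxd j [::] = 0.
Proof. exact: phi_eval_nil. Qed.

Lemma foxd_letter j a : foxd j [:: a] = (a.1 == j)%:R * lcoef a.
Proof.
rewrite /foxd /= phi_eval_cat phi_eval_nil addr0.
case: (a.1 == j); last by rewrite mul0r phi_eval_nil.
rewrite mul1r /lcoef /phi_eval; case: a => k [] /=; rewrite big_seq1 /=.
  by rewrite expsum_nil expr0z mulr1.
by rewrite expsum_letter mulN1r.
Qed.

Lemma foxd_cons j a w : foxd j (a :: w) = foxd j [:: a] + t ^ lexp a * foxd j w.
Proof.
rewrite {1}/foxd /= phi_eval_cat phi_eval_lmul expsum_letter.
by congr (_ + _); rewrite /foxd /= phi_eval_cat phi_eval_nil addr0.
Qed.

Lemma foxd_cat j u w : foxd j (u ++ w) = foxd j u + t ^ expsum u * foxd j w.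
Proof.
elim: u => [|a u IH] /=; first by rewrite foxd_nil expsum_nil expr0z mul1r add0r.
rewrite foxd_cons IH (foxd_cons j a u) expsum_cons expfzDr //.
by rewrite mulrDr addrA mulrA.
Qed.

Lemma mul_expfzN (e : int) : t ^ e * t ^ (- e) = 1.
Proof. by rewrite -expfzDr // subrr expr0z. Qed.

Lemma foxd_linv j a : foxd j [:: linv a] = - t ^ (- lexp a) * foxd j [:: a].
Proof.
rewrite !foxd_letter /linv /lcoef /lexp; case: a => k [] /=; first by ring.
by rewrite opprK expr1z exprN1 mulrN mulrNN mulrCA mulfV // !mulr1.
Qed.

Lemma foxd_push j a w : foxd j (push a w) = foxd j (a :: w).
Proof.
case: w => [|b w] //; rewrite /push; case: eqP => [->|_] //.
rewrite foxd_cons (foxd_cons j (linv a)) foxd_linv lexp_linv.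
by rewrite mulrDr mulNr mulrN !mulrA mul_expfzN !mul1r addrA subrr add0r.
Qed.

Lemma foxd_reduce j w : foxd j (reduce w) = foxd j w.
Proof.
elim: w => //= a w IH.
by rewrite foxd_push foxd_cons IH -foxd_cons.
Qed.

Lemma foxd_winv j w : foxd j (winv w) = - t ^ (- expsum w) * foxd j w.
Proof.
elim: w => [|a w IH]; first by rewrite /winv /= foxd_nil mulr0.
rewrite winv_cons foxd_cat IH expsum_winv foxd_linv expsum_cons (foxd_cons j a w).
rewrite opprD expfzDr //.
have := mul_expfzN (lexp a); set Z := t ^ lexp a; set X := t ^ (- lexp a) => ZX.
set Y := t ^ (- expsum w); set A := foxd j [:: a]; set B := foxd j w.
have -> : - (X * Y) * (A + Z * B) = - (X * Y) * A - Y * (Z * X) * B by ring.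
by rewrite ZX mulr1; ring.
Qed.

End FoxDerivative.

Lemma sum_delta_mul (R : nzRingType) (I : finType) (i : I) (x : I -> R) :
  \sum_k (i == k)%:R * x k = x i.
Proof.
rewrite (bigD1 i) //= eqxx mul1r big1 ?addr0 // => k /negbTE.
by rewrite eq_sym => ->; rewrite mul0r.
Qed.

Section FoxChainRule.
Variables (F : fieldType) (n : nat) (t : F) (f : 'I_n -> word n).
Hypotheses (t_neq0 : t != 0) (expsum_f : forall i, expsum (f i) = 1).
Local Notation B := (burau_eval f t).

Lemma burau_evalE i j : B i j = foxd t j (f i).
Proof. by rewrite mxE; exact: foxd_reduce. Qed.

Lemma foxd_limg j a : foxd t j (limg f a) = lcoef t a * B a.1 j.
Proof.
rewrite burau_evalE; case: a => k [] /=; first by rewrite mul1r.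
by rewrite foxd_winv // expsum_f.
Qed.

Lemma foxd_apply j w : foxd t j (apply f w) = \sum_k foxd t k w * B k j.
Proof.
rewrite applyE foxd_reduce //; elim: w => [|a w IH] /=.
  by rewrite foxd_nil big1 // => k _; rewrite foxd_nil mul0r.
rewrite foxd_cat // foxd_limg IH expsum_limg //.
under [RHS]eq_bigr => k _ do rewrite (foxd_cons t_neq0 k a w) foxd_letter mulrDl -mulrA.
rewrite big_split /= (sum_delta_mul a.1 (fun i => lcoef t a * B i j)) mulr_sumr.
by congr (_ + _); apply: eq_bigr => k _; rewrite mulrA.
Qed.

Lemma eigenrow_foxd_iter (v : 'rV[F]_n) lam : v *m B = lam *: v -> forall p j,
  \sum_i v 0 i * foxd t j (apply_pow f p (gen i)) = lam ^+ p * v 0 j.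
Proof.
move=> eig_v; elim=> [|p IH] j.
  under eq_bigr => i _ do rewrite /apply_pow /= foxd_letter /= mulr1 mulrC eq_sym.
  by rewrite sum_delta_mul expr0 mul1r.
under eq_bigr => i _ do rewrite [apply_pow _ _ _]/= foxd_apply mulr_sumr.
rewrite exchange_big /=.
under eq_bigr => k _ do (under eq_bigr => i _ do rewrite mulrA; rewrite -mulr_suml IH -mulrA).
have := congr1 (fun M : 'rV_n => M 0 j) eig_v; rewrite !mxE => eig_vj.
by rewrite -mulr_sumr eig_vj exprSr mulrA.
Qed.

End FoxChainRule.

Section UnitModulus.
Variable R : realType.
Local Notation normc := (@Normc.normc R).

Lemma normc_ge0 (x : R[i]) : 0 <= normc x.
Proof. by case: x => a b; exact: sqrtr_ge0. Qed.

Lemma normc_sum (I : Type) (r : seq I) (P : pred I) (F : I -> R[i]) :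
  normc (\sum_(i <- r | P i) F i) <= \sum_(i <- r | P i) normc (F i).
Proof.
elim/big_ind2: _ => [|x1 y1 x2 y2 le1 le2|//]; first by rewrite Normc.normc0.
by apply: le_trans (le_normcD _ _) _; exact: lerD.
Qed.

Lemma normc_expr (x : R[i]) p : normc (x ^+ p) = normc x ^+ p.
Proof.
elim: p => [|p IH]; first by rewrite !expr0 Normc.normc1.
by rewrite !exprS Normc.normcM IH.
Qed.

Variables (n : nat) (t : R[i]).
Hypothesis normc_t : normc t = 1.

Lemma normc1_neq0 : t != 0.
Proof. by apply: contra_eq_neq normc_t => ->; rewrite Normc.normc0 eq_sym oner_neq0. Qed.

Lemma normc_exprz (e : int) : normc (t ^ e) = 1.
Proof.
by case: e => k; rewrite /exprz ?Normc.normcV normc_expr normc_t expr1n ?invr1.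
Qed.

Lemma normc_foxd_letter j (a : letter n) : normc (foxd t j [:: a]) <= 1.
Proof.
rewrite foxd_letter; case: (a.1 == j); last by rewrite mul0r Normc.normc0.
rewrite mul1r /lcoef; case: a.2; first by rewrite Normc.normc1.
by rewrite normcN normc_exprz.
Qed.

Lemma normc_foxd_le_size j (w : word n) : normc (foxd t j w) <= (size w)%:R.
Proof.
elim: w => [|a w IH]; first by rewrite foxd_nil Normc.normc0.
rewrite (foxd_cons normc1_neq0) /= -natr1 addrC.
apply: le_trans (le_normcD _ _) _; apply: lerD; last exact: normc_foxd_letter.
by rewrite Normc.normcM normc_exprz mul1r.
Qed.

Lemma normc_foxd_le_wlen j (w : word n) : normc (foxd t j w) <= (wlen w)%:R.
Proof. by rewrite -(foxd_reduce normc1_neq0); exact: normc_foxd_le_size. Qed.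

End UnitModulus.

Lemma eigenrow_growth_bound (R : realType) (n : nat) (f : 'I_n -> word n)
    (t lam : R[i]) (v : 'rV[R[i]]_n) :
  (forall i, expsum (f i) = 1) -> Normc.normc t = 1 -> v *m burau_eval f t = lam *: v ->
  forall p j, Normc.normc lam ^+ p * Normc.normc (v 0 j) <=
    \sum_i Normc.normc (v 0 i) * (wlen (apply_pow f p (gen i)))%:R.
Proof.
move=> expsum_f normc_t eig_v p j.
rewrite -normc_expr -Normc.normcM.
rewrite -(eigenrow_foxd_iter (normc1_neq0 normc_t) expsum_f eig_v).
apply: le_trans (normc_sum _ _ _) _; apply: ler_sum => i _.
by rewrite Normc.normcM ler_wpM2l ?normc_ge0 ?normc_foxd_le_wlen.
Qed.

Section Asymptotics.
Variable R : realType.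

Lemma expr_eventually_lt (q e : R) : 0 <= q < 1 -> 0 < e ->
  exists M, forall p, (M <= p)%N -> q ^+ p < e.
Proof.
move=> /andP[q_ge0 q_lt1] e_gt0.
have q_norm : `|q| < 1 by rewrite ger0_norm.
have /cvgr0_norm_lt /(_ e e_gt0) [M _ HM] := @cvg_expr R q q_norm.
by exists M => p /HM /=; rewrite ger0_norm // exprn_ge0.
Qed.

Lemma eventually_exists_ge_expr (I : finType) (L : I -> nat -> nat) (s : I -> R)
    (c N r : R) :
  (forall i, 0 <= s i) -> 0 < c -> (forall p, N ^+ p * c <= \sum_i s i * (L i p)%:R) ->
  0 <= r < N -> exists M, forall p, (M <= p)%N -> exists i, r ^+ p <= (L i p)%:R.
Proof.
move=> s_ge0 c_gt0 lower /andP[r_ge0 r_ltN].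
have N_gt0 : 0 < N := le_lt_trans r_ge0 r_ltN.
pose S := \sum_i s i.
have S1_gt0 : 0 < S + 1 by rewrite ltr_wpDl ?sumr_ge0.
have [M small] : exists M, forall p, (M <= p)%N -> (r / N) ^+ p < c / (S + 1).
  apply: expr_eventually_lt; last exact: divr_gt0.
  by rewrite divr_ge0 ?(ltW N_gt0) //= ltr_pdivrMr // mul1r.
exists M => p /small; rewrite exprMn exprVn ltr_pdivrMr ?exprn_gt0 // => r_small.
apply/existsP; apply: contraT; rewrite negb_exists => /forallP none.
have upper : \sum_i s i * (L i p)%:R <= S * r ^+ p.
  rewrite mulr_suml; apply: ler_sum => i _.
  by rewrite ler_wpM2l // ltW // ltNge none.
have : (S + 1) * r ^+ p < N ^+ p * c.
  have -> : N ^+ p * c = (S + 1) * (c / (S + 1) * N ^+ p).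
    by field; rewrite lt0r_neq0.
  by rewrite ltr_pM2l.
rewrite mulrDl mul1r => upper_lt.
have : N ^+ p * c < N ^+ p * c.
  apply: le_lt_trans upper_lt; apply: le_trans (lower p) (le_trans upper _).
  by rewrite lerDl exprn_ge0.
by rewrite ltxx.
Qed.


Lemma infinitely_often_pigeonhole (I : finType) (P : I -> nat -> Prop) (M : nat) :
  (forall p, (M <= p)%N -> exists i, P i p) ->
  exists i, forall m, exists2 p, (m < p)%N & P i p.
Proof.
move=> late_some; apply: contrapT => /forallNP never.
have /choice[g late] : forall i, exists m, forall p, (m < p)%N -> ~ P i p.
  by move=> i; have /existsNP[m /forallPNP] := never i; exists m.
have [k] := late_some (M + (\max_i g i).+1)%N (leq_addr _ _).
by apply: late; apply: ltn_addl; rewrite ltnS; exact: leq_bigmax.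
Qed.

Lemma limn_esup_root_ge (u : nat -> nat) (r : R) : 0 <= r ->
  (forall m, exists2 p, (m < p)%N & r ^+ p <= (u p)%:R) ->
  (r%:E <= limn_esup (fun p : nat => (((u p)%:R : R) `^ p%:R^-1)%:E))%E.
Proof.
move=> r_ge0 often.
rewrite limn_esup_lim (cvg_lim _ (@cvg_esups_inf R (fun p : nat => (((u p)%:R : R) `^ p%:R^-1)%:E))) //.
apply: le_ereal_inf_tmp => _ [m _ <-].
have [p mp rp] := often m.
apply: le_ereal_sup_tmp; exists (((u p)%:R : R) `^ p%:R^-1)%:E; first by exists p => //=; exact: ltnW.
have p_neq0 : (p%:R : R) != 0 by rewrite pnatr_eq0 -lt0n (leq_ltn_trans (leq0n m)).
have -> : r = (r ^+ p) `^ p%:R^-1 by rewrite -powR_mulrn // -powRrM mulfV ?powRr1.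
by rewrite lee_fin ge0_ler_powR ?invr_ge0 ?nnegrE ?exprn_ge0.
Qed.

Lemma lee_fin_of_lt (N : R) (x : \bar R) :
  (0 <= x)%E -> (forall r, 0 <= r < N -> (r%:E <= x)%E) -> (N%:E <= x)%E.
Proof.
case: x => [g| |] // g_ge0 below; last by rewrite leey.
rewrite lee_fin in g_ge0 *; rewrite leNgt; apply/negP => gN.
have [gm mN] := midf_lt gN.
have := below ((g + N) / 2); rewrite lee_fin mN (le_trans g_ge0 (ltW gm)) leNgt gm.
by move=> /(_ isT).
Qed.

End Asymptotics.

Section GrowthRateBounds.
Variables (R : realType) (n : nat) (f : 'I_n -> word n).
Local Notation GR := (growth_rate (R := R) f).

Lemma growth_rate_ge (w : word n) (r : R) : 0 <= r ->
  (forall m, exists2 p, (m < p)%N & r ^+ p <= (wlen (apply_pow f p w))%:R) ->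
  (r%:E <= GR)%E.
Proof.
move=> r_ge0 often; apply: le_trans (limn_esup_root_ge r_ge0 often) _.
by apply: ereal_sup_ubound; exists w.
Qed.

Lemma growth_rate_ge0 : (0 <= GR)%E.
Proof. by apply: (@growth_rate_ge [::] 0 (lexx 0)) => m; exists m.+1; rewrite ?expr0n. Qed.

Lemma eigenvalue_le_growth_rate (t lam : R[i]) :
  (forall i, expsum (f i) = 1) -> Normc.normc t = 1 ->
  eigenvalue (burau_eval f t) lam -> ((Normc.normc lam)%:E <= GR)%E.
Proof.
move=> expsum_f normc_t /eigenvalueP[v eig_v /rV0Pn[j vj_neq0]].
have vj_gt0 : 0 < Normc.normc (v 0 j).
  by rewrite lt_def normc_ge0 andbT; apply: contra vj_neq0 => /eqP/Normc.eq0_normc->.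
apply: lee_fin_of_lt growth_rate_ge0 _ => r r_range.
have [M often] := eventually_exists_ge_expr (fun i => normc_ge0 (v 0 i)) vj_gt0
  (eigenrow_growth_bound expsum_f normc_t eig_v ^~ j) r_range.
have [i /growth_rate_ge] := infinitely_often_pigeonhole often.
by apply; case/andP: r_range.
Qed.

End GrowthRateBounds.

Theorem theorem1 (R : realType) (n : nat) (f : 'I_n -> word n) :
  (2 <= n)%N -> is_braid f ->
  (ereal_sup [set spectral_radius (burau_eval f t0)
             | t0 in [set t0 : R[i] | Normc.normc t0 = 1%R]]
   <= growth_rate (R := R) f)%E.
Proof.
move=> _ /braid_expsum_gen expsum_f.
apply: ge_ereal_sup => _ [t0 /= normc_t0 <-].
apply: ge_ereal_sup => _ [lam /= eig_lam <-].
exact: (eigenvalue_le_growth_rate expsum_f normc_t0 eig_lam).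
Qed.
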